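(* Let $\mathcal{P}$ be a Class II source set, i.e. there is a permutation $T$ of $\{1,\ldots,M\}$ such that every $P\in\mathcal{P}$ satisfies $P_{T(1)} \ge P_{T(2)} \ge \dots \ge P_{T(M)}$. Then for every $0< D\le 1$ there exists an optimal mechanism, i.e. a mechanism $Q_{\hat X|X}$ attaining $\epsilon^*_{\mathrm{DP}}(\mathcal{P},D)=\min_{Q\in\mathcal{Q}(\mathcal{P},D)}\epsilon_{\mathrm{DP}}(Q)$, whose distortions $D_i=1-Q(i|i)$ satisfy $D_{T(1)} \le D_{T(2)} \le \dots \le D_{T(M)}$.
   Context: Data $X$ takes values in the finite alphabet $\mathcal{X}=\hat{\mathcal{X}}=\{1,\ldots,M\}$ and is drawn from an unknown distribution $P$ belonging to a known set $\mathcal{P}$ of distributions on $\{1,\ldots,M\}$ (a source set); $P_i$ denotes $P(X=i)$. A mechanism is a conditional distribution (row-stochastic $M\times M$ matrix) $Q_{\hat X|X}=Q(j|i)$ mapping input $X$ to output $\hat X$. Distortion is Hamming distortion $d(x,y)=\mathbb{1}[x\neq y]$, so the average distortion under $P$ is $\sum_{i=1}^M P_i D_i$ with $D_i = 1-Q(i|i)$. A mechanism is $(\mathcal{P},D)$-valid if $\sum_{i=1}^M P_i D_i\le D$ for all $P\in\mathcal{P}$; $\mathcal{Q}(\mathcal{P},D)$ is the set of such mechanisms. The differential privacy leakage is $\epsilon_{\mathrm{DP}}(Q)=\min\{\epsilon: Q(\hat x|x_1)\le e^{\epsilon}Q(\hat x|x_2)\ \forall x_1,x_2,\hat x\}$.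 A source set is Class I if its convex hull contains the uniform distribution; it is Class II if it is not Class I and there exists a single permutation $T$ with $P_{T(1)}\ge \dots\ge P_{T(M)}$ for every $P\in\mathcal{P}$. *)

From HB Require Import structures.
From mathcomp Require Import all_boot all_order all_algebra all_fingroup.
From mathcomp Require Import all_classical all_reals all_analysis.
Set Implicit Arguments. Unset Strict Implicit. Unset Printing Implicit Defensive.
Import Order.TTheory GRing.Theory Num.Theory.
Local Open Scope ring_scope.
Local Open Scope classical_set_scope.

Definition is_distr (R : realType) (M : nat) (P : 'I_M -> R) : Prop :=
  (forall i, 0 <= P i) /\ \sum_(i < M) P i = 1.

(* A mechanism Q i j = Q(j | i): a row-stochastic M x M matrix. *)
Definition is_mechanism (R : realType) (M : nat) (Q : 'I_M -> 'I_M -> R) : Prop :=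
  forall i, is_distr (Q i).

Definition distortion (R : realType) (M : nat) (Q : 'I_M -> 'I_M -> R) (i : 'I_M) : R :=
  1 - Q i i.

Definition valid_mech (R : realType) (M : nat) (Ps : set ('I_M -> R)) (D : R)
  (Q : 'I_M -> 'I_M -> R) : Prop :=
  is_mechanism Q /\
  forall P, Ps P -> \sum_(i < M) P i * distortion Q i <= D.

Definition dp_bound (R : realType) (M : nat) (Q : 'I_M -> 'I_M -> R) (eps : R) : Prop :=
  forall x1 x2 xh : 'I_M, Q x1 xh <= expR eps * Q x2 xh.

(* DP leakage eps_DP(Q) = min {eps | dp_bound Q eps}, as an extended real
   (+oo when no finite eps works). *)
Definition eps_DP (R : realType) (M : nat) (Q : 'I_M -> 'I_M -> R) : \bar R :=
  ereal_inf [set e%:E | e in [set e : R | dp_bound Q e]].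

Definition optimal_mech (R : realType) (M : nat) (Ps : set ('I_M -> R)) (D : R)
  (Q : 'I_M -> 'I_M -> R) : Prop :=
  valid_mech Ps D Q /\
  forall Q', valid_mech Ps D Q' -> (eps_DP Q <= eps_DP Q')%E.

Definition classII_perm (R : realType) (M : nat) (Ps : set ('I_M -> R)) (T : {perm 'I_M}) : Prop :=
  forall P, Ps P -> forall a b : 'I_M, (a <= b)%N -> P (T b) <= P (T a).

Definition classI (R : realType) (M : nat) (Ps : set ('I_M -> R)) : Prop :=
  exists (n : nat) (w : 'I_n -> R) (Pf : 'I_n -> ('I_M -> R)),
    (forall k, 0 <= w k) /\ \sum_(k < n) w k = 1 /\ (forall k, Ps (Pf k)) /\
    forall i, \sum_(k < n) w k * Pf k i = (M%:R)^-1.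

Definition classII (R : realType) (M : nat) (Ps : set ('I_M -> R)) (T : {perm 'I_M}) : Prop :=
  ~ classI Ps /\ classII_perm Ps T.

(* Relabelling inputs and outputs of a mechanism by one permutation p keeps its
   leakage and permutes its distortions.  Among the relabellings that do not
   increase the average distortion under any P of the source set, take one
   maximising the potential sum_a a * D_(p (T a)).  If its distortions were not
   nondecreasing along T, swapping an out-of-order pair would keep the average
   distortion down (each P is nonincreasing along T) and raise the potential.
   Applied to an optimal mechanism, which exists because the valid mechanisms
   with bounded e^eps form a compact set, this gives the claim. *)
From HB Require Import structures.
From mathcomp Require Import all_boot all_order all_algebra all_fingroup.
From mathcomp Require Import all_classical all_reals all_analysis.
From mathcomp Require Import ring.
Import Order.TTheory GRing.Theory Num.Theory.
Import numFieldNormedType.Exports.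
Set Implicit Arguments. Unset Strict Implicit. Unset Printing Implicit Defensive.
Local Open Scope ring_scope.
Local Open Scope classical_set_scope.

(* [dp_bound Q e] is [dp_ratio_bound Q (expR e)]; unlike [e], the ratio [E] may
   reach its infimum inside a closed set, which is what compactness needs. *)
Definition dp_ratio_bound (R : realType) (M : nat) (Q : 'I_M -> 'I_M -> R) (E : R) :=
  forall x1 x2 xh : 'I_M, Q x1 xh <= E * Q x2 xh.

Definition relabel_mech (R : realType) (M : nat) (p : {perm 'I_M})
    (Q : 'I_M -> 'I_M -> R) : 'I_M -> 'I_M -> R :=
  fun i j => Q (p i) (p j).

Section Rearrangement.
Variables (R : realType) (M : nat).
Implicit Types (f g d : 'I_M -> R) (p : {perm 'I_M}).

Lemma sum_mul_tperm f g u v : u != v ->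
  \sum_i f i * g (tperm u v i) = \sum_i f i * g i + (f u - f v) * (g v - g u).
Proof.
move=> uv; have vu : v != u by rewrite eq_sym.
rewrite (bigD1 u) //= (bigD1 v) //= [in RHS](bigD1 u) //= [in RHS](bigD1 v) //=.
rewrite tpermL tpermR (eq_bigr (fun i => f i * g i)); first by ring.
by move=> i /andP[iv iu]; rewrite tpermD // eq_sym.
Qed.

Lemma sum_mul_tperm_le f g u v : f v <= f u -> g v <= g u ->
  \sum_i f i * g (tperm u v i) <= \sum_i f i * g i.
Proof.
move=> fvu gvu; have [<-|uv] := eqVneq u v.
  by under eq_bigr do rewrite tperm1 perm1.
rewrite sum_mul_tperm // gerDl mulr_ge0_le0 // ?subr_ge0 ?subr_le0 //.
Qed.

Variables (Ps : set ('I_M -> R)) (T : {perm 'I_M}).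
Hypothesis HT : classII_perm Ps T.

Lemma exists_perm_sorted_along d : exists p,
  (forall P, Ps P -> \sum_i P i * d (p i) <= \sum_i P i * d i) /\
  forall a b : 'I_M, (a <= b)%N -> d (p (T a)) <= d (p (T b)).
Proof.
pose good p := `[< forall P, Ps P -> \sum_i P i * d (p i) <= \sum_i P i * d i >].
(* Swapping an out-of-order pair strictly increases the potential. *)
pose potential p := \sum_(a < M) (a : nat)%:R * d (p (T a)).
have good1 : good 1%g by apply/asboolP => P _; under eq_bigr do rewrite perm1.
have [p /asboolP gp pmax] := arg_maxP potential good1.
exists p; split => // a b ab; rewrite leNgt; apply/negP => ba.
pose q := (tperm (T a) (T b) * p)%g.
have qE i : q i = p (tperm (T a) (T b) i) by rewrite permM.
have /pmax : good q.
  apply/asboolP => P PP; apply: le_trans (gp P PP).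
  under eq_bigr do rewrite qE.
  by apply: (@sum_mul_tperm_le P (fun i => d (p i))); [exact: HT | exact: ltW].
apply/negP; rewrite -ltNge.
have ab' : a != b by apply: contraTneq ba => ->; rewrite ltxx.
rewrite /potential.
under [X in _ < X]eq_bigr do rewrite qE -(inj_tperm _ _ _ (@perm_inj _ T)).
rewrite (sum_mul_tperm (fun k : 'I_M => (k : nat)%:R) (fun k => d (p (T k))) ab').
by rewrite ltrDl nmulr_rgt0 ?subr_lt0 // ltr_nat ltn_neqAle ab' ab.
Qed.
End Rearrangement.

Section Relabeling.
Variables (R : realType) (M : nat) (p : {perm 'I_M}) (Q : 'I_M -> 'I_M -> R).

Lemma is_mechanism_relabel : is_mechanism Q -> is_mechanism (relabel_mech p Q).
Proof.
move=> mQ i; have [Q_ge0 Q_sum1] := mQ (p i); split=> [j|]; first exact: Q_ge0.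
by rewrite -Q_sum1 [RHS](reindex_inj (@perm_inj _ p)).
Qed.

Lemma dp_ratio_bound_relabel E :
  dp_ratio_bound Q E -> dp_ratio_bound (relabel_mech p Q) E.
Proof. by move=> QE a b c; exact: QE. Qed.

End Relabeling.

Lemma exists_relabel_sorted (R : realType) (M : nat) (Ps : set ('I_M -> R))
    (T : {perm 'I_M}) (D : R) (Q : 'I_M -> 'I_M -> R) :
  classII_perm Ps T -> valid_mech Ps D Q -> exists p : {perm 'I_M},
    valid_mech Ps D (relabel_mech p Q) /\ forall a b : 'I_M, (a <= b)%N ->
      distortion (relabel_mech p Q) (T a) <= distortion (relabel_mech p Q) (T b).
Proof.
move=> HT [mQ QD].
have [p [p_avg p_sorted]] := exists_perm_sorted_along HT (distortion Q).
exists p; split=> //; split; first exact: is_mechanism_relabel.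
by move=> P PP; apply: le_trans (p_avg P PP) (QD P PP).
Qed.

Lemma dp_ratio_bound_ge1 (R : realType) (M : nat) (Q : 'I_M -> 'I_M -> R) (E : R)
    (i : 'I_M) :
  is_mechanism Q -> dp_ratio_bound Q E -> 1 <= E.
Proof.
move=> mQ QE; have [_ Q_sum1] := mQ i.
by rewrite -[E]mulr1 -{1 2}Q_sum1 mulr_sumr; apply: ler_sum => j _; exact: QE.
Qed.

Lemma is_distr_le1 (R : realType) (M : nat) (q : 'I_M -> R) (j : 'I_M) :
  is_distr q -> q j <= 1.
Proof.
move=> [q_ge0 q_sum1]; rewrite -q_sum1 (bigD1 j) //= lerDl.
by apply: sumr_ge0 => i _.
Qed.

Section Compactness.
Import ArrowAsProduct.
Variable R : realType.

Lemma closed_forall (T : topologicalType) (I : Type) (A : I -> set T) :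
  (forall i, closed (A i)) -> closed [set x | forall i, A i x].
Proof.
move=> A_closed; have -> : [set x | forall i, A i x] = \bigcap_(i in setT) A i.
  by apply/seteqP; split=> [x Ax i _ | x Ax i]; [exact: Ax | exact: Ax].
exact: closed_bigI.
Qed.

Lemma closed_fun_le (T : topologicalType) (f g : T -> R) :
  continuous f -> continuous g -> closed [set x | f x <= g x].
Proof.
move=> f_cont g_cont.
have -> : [set x | f x <= g x] = (g - f) @^-1` [set r | 0 <= r].
  by apply/seteqP; split=> x /=; rewrite subr_ge0.
apply: preimage_closed; last exact: closed_ge.
by move=> x _; apply: continuousB; [exact: g_cont | exact: f_cont].
Qed.

Lemma closed_fun_eq (T : topologicalType) (f : T -> R) (c : R) :
  continuous f -> closed [set x | f x = c].
Proof.
move=> f_cont; apply: (@preimage_closed _ _ f [set y | y = c]); last exact: closed_eq.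
by move=> x _; exact: f_cont.
Qed.

Lemma fst_continuous (U V : topologicalType) : continuous (@fst U V).
Proof. by move=> x; exact: cvg_fst. Qed.

Lemma snd_continuous (U V : topologicalType) : continuous (@snd U V).
Proof. by move=> x; exact: cvg_snd. Qed.

Lemma continuous_mul (T : topologicalType) (f g : T -> R) :
  continuous f -> continuous g -> continuous (fun x => f x * g x).
Proof.
by move=> f_cont g_cont x; apply: continuousM; [exact: f_cont | exact: g_cont].
Qed.

Lemma unit_cube_compact (I : eqType) :
  compact [set f : I -> R | forall i, `[0, 1]%classic (f i)].
Proof.
exact: (@tychonoff I (fun=> (R : topologicalType)) _ (fun=> @segment_compact R 0 1)).
Qed.

Variable M : nat.

Lemma mech_cube_compact :
  compact [set Q : 'I_M -> 'I_M -> R | forall i j, `[0, 1]%classic (Q i j)].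
Proof.
exact: (@tychonoff _ (fun=> ('I_M -> R : topologicalType)) _
  (fun=> @unit_cube_compact 'I_M)).
Qed.

Lemma entry_continuous i j : continuous (fun Q : 'I_M -> 'I_M -> R => Q i j).
Proof.
have row_cont : continuous (fun Q : 'I_M -> 'I_M -> R => Q i).
  by move=> Q; exact: proj_continuous.
have coord_cont : continuous (fun f : 'I_M -> R => f j).
  by move=> f; exact: proj_continuous.
by move=> Q; exact: (continuous_comp (row_cont Q) (coord_cont _)).
Qed.

Lemma sum_continuous (T : topologicalType) (F : 'I_M -> T -> R) :
  (forall i, continuous (F i)) -> continuous (fun x => \sum_i F i x).
Proof.
move=> F_cont; apply: continuous_big => [|i _]; [exact: add_continuous | exact: F_cont].
Qed.

Lemma distortion_continuous i :
  continuous (fun Q : 'I_M -> 'I_M -> R => distortion Q i).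
Proof.
by move=> Q; apply: continuousB; [exact: cst_continuous | exact: entry_continuous].
Qed.

Variables (Ps : set ('I_M -> R)) (D : R).

Lemma closed_valid_mech : closed [set Q : 'I_M -> 'I_M -> R | valid_mech Ps D Q].
Proof.
apply: closedI.
  apply: closed_forall => i; apply: closedI.
    apply: closed_forall => j.
    by apply: closed_fun_le; [exact: cst_continuous | exact: entry_continuous].
  by apply: closed_fun_eq; apply: sum_continuous => j; exact: entry_continuous.
apply: closed_bigI => P _; apply: closed_fun_le; last exact: cst_continuous.
apply: sum_continuous => i; apply: continuous_mul; first exact: cst_continuous.
exact: distortion_continuous.
Qed.

Lemma closed_dp_ratio_bound :
  closed [set x : ('I_M -> 'I_M -> R) * R | dp_ratio_bound x.1 x.2].
Proof.
have entry_cont i j : continuous (fun x : ('I_M -> 'I_M -> R) * R => x.1 i j).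
  have fst_cont : continuous (fun x : ('I_M -> 'I_M -> R) * R => x.1).
    exact: fst_continuous.
  have Qij_cont := @entry_continuous i j.
  by move=> x; exact: (continuous_comp (fst_cont x) (Qij_cont _)).
apply: closed_forall => a; apply: closed_forall => b; apply: closed_forall => c.
apply: closed_fun_le; first exact: entry_cont.
by apply: continuous_mul; [exact: snd_continuous | exact: entry_cont].
Qed.

Lemma exists_min_dp_ratio_bound (i0 : 'I_M) (Q0 : 'I_M -> 'I_M -> R) (E0 : R) :
  valid_mech Ps D Q0 -> dp_ratio_bound Q0 E0 ->
  exists (Q : 'I_M -> 'I_M -> R) (E : R),
    [/\ valid_mech Ps D Q, dp_ratio_bound Q E &
      forall Q' E', valid_mech Ps D Q' -> dp_ratio_bound Q' E' -> E <= E'].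
Proof.
move=> vQ0 Q0E0.
pose A := (fst @^-1` [set Q | valid_mech Ps D Q]) `&`
  [set x | dp_ratio_bound x.1 x.2] `&` [set x | x.2 <= E0].
have A_closed : closed A.
  apply: closedI; first apply: closedI.
  - by apply: preimage_closed closed_valid_mech => x _; exact: fst_continuous.
  - exact: closed_dp_ratio_bound.
  - by apply: closed_fun_le; [exact: snd_continuous | exact: cst_continuous].
have A_compact : compact A.
  apply: (subclosed_compact A_closed (compact_setX mech_cube_compact
    (@segment_compact R 1 E0))).
  move=> [Q E] [[[mQ _] QE] /= EE0]; split=> /=.
    move=> i j; rewrite /= in_itv /= ((mQ i).1 j).
    exact: is_distr_le1.
  by rewrite in_itv /= EE0 (dp_ratio_bound_ge1 i0 mQ QE).
have A0 : A !=set0 by exists (Q0, E0); split; [split|] => //=.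
have snd_within : {within A, continuous snd}.
  by apply: continuous_subspaceT; exact: snd_continuous.
have [[Q E] /set_mem [[vQ QE] /= EE0] E_min] :=
  compact_EVT_min A0 A_compact snd_within.
exists Q, E; split=> // Q' E' vQ' Q'E'.
have [E'E0|E0E'] := leP E' E0; first exact: (E_min (Q', E')) (mem_set _).
by rewrite (le_trans EE0) ?ltW.
Qed.
End Compactness.

Section Optimality.
Variables (R : realType) (M : nat) (Ps : set ('I_M -> R)) (D : R).

Lemma optimal_of_min_dp_ratio_bound (Q : 'I_M -> 'I_M -> R) (E : R) :
  valid_mech Ps D Q -> 0 < E -> dp_ratio_bound Q E ->
  (forall Q' E', valid_mech Ps D Q' -> dp_ratio_bound Q' E' -> E <= E') ->
  optimal_mech Ps D Q.
Proof.
move=> vQ E_gt0 QE E_min; split=> // Q' vQ'.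
apply: (@le_trans _ _ (ln E)%:E).
  apply: ereal_inf_lbound; exists (ln E) => // a b c.
  by rewrite lnK ?posrE //; exact: QE.
apply: le_ereal_inf_tmp => _ [e Q'e <-].
by rewrite lee_fin -(expRK e) ler_ln ?posrE ?expR_gt0 //; exact: E_min Q'e.
Qed.

Lemma eps_DP_pinfty (Q : 'I_M -> 'I_M -> R) :
  (forall e, ~ dp_bound Q e) -> eps_DP Q = +oo%E.
Proof.
move=> no_bound; rewrite /eps_DP (_ : [set e | dp_bound Q e] = set0).
  by rewrite image_set0 ereal_inf0.
by apply/seteqP; split=> e // /no_bound.
Qed.

Definition id_mech : 'I_M -> 'I_M -> R := fun i j => (i == j)%:R.

Lemma distortion_id_mech i : distortion id_mech i = 0.
Proof. by rewrite /distortion /id_mech eqxx subrr. Qed.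

Lemma valid_id_mech : 0 <= D -> valid_mech Ps D id_mech.
Proof.
move=> D_ge0; split=> [i|P _]; last first.
  by rewrite big1 // => i _; rewrite distortion_id_mech mulr0.
split=> [j|]; first by rewrite /id_mech ler0n.
rewrite (bigD1 i) //= big1 ?addr0 /id_mech ?eqxx // => j /negbTE.
by rewrite eq_sym => ->.
Qed.

End Optimality.

Arguments id_mech {R M}.

Lemma eps_DP_ord0 (R : realType) (Q Q' : 'I_0 -> 'I_0 -> R) : eps_DP Q = eps_DP Q'.
Proof.
by rewrite /eps_DP; congr (ereal_inf (_ @` _)); apply/seteqP; split=> e _ [].
Qed.

Theorem lemma2 (R : realType) (M : nat) (Ps : set ('I_M -> R)) (T : {perm 'I_M})
  (HPs : forall P, Ps P -> is_distr P)
  (HII : classII Ps T) (D : R) (hD0 : 0 < D) (hD1 : D <= 1) :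
  exists Q : 'I_M -> 'I_M -> R,
    optimal_mech Ps D Q /\
    forall a b : 'I_M, (a <= b)%N -> distortion Q (T a) <= distortion Q (T b).
Proof.
have [_ HT] := HII.
have valid_id := valid_id_mech Ps (ltW hD0).
have id_sorted a b : distortion (@id_mech R M) a <= distortion id_mech b.
  by rewrite !distortion_id_mech.
have [M0|M_gt0] := posnP M.
  subst M; exists id_mech; split=> //; split=> // Q' _.
  by rewrite (eps_DP_ord0 _ Q').
have [[Q0 [E0 [vQ0 Q0E0]]] | no_bound] :=
  pselect (exists Q E, valid_mech Ps D Q /\ dp_ratio_bound Q E).
  have [Q [E [vQ QE E_min]]] := exists_min_dp_ratio_bound (Ordinal M_gt0) vQ0 Q0E0.
  have [p [vQp Qp_sorted]] := exists_relabel_sorted HT vQ.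
  exists (relabel_mech p Q); split=> //.
  apply: (optimal_of_min_dp_ratio_bound vQp _ (dp_ratio_bound_relabel p QE) E_min).
  exact: lt_le_trans ltr01 (dp_ratio_bound_ge1 (Ordinal M_gt0) vQ.1 QE).
(* No valid mechanism has finite leakage, so the identity is optimal. *)
exists id_mech; split=> //; split=> // Q' vQ'.
rewrite [eps_DP Q']eps_DP_pinfty ?leey // => e Q'e.
by apply: no_bound; exists Q', (expR e).
Qed.
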